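(* Let $Q\subset\mathbb R^2$ be a polygonal set with center of mass $\overline{\mathbf x}_Q$, and let $\mathcal T^Q$ be a conforming triangulation of $Q$ into triangles, with set of triangles $\mathcal M^Q$ and set of boundary edges $\mathcal E^Q_{\rm ext}$ (edges lying on $\partial Q$). For each triangle $T$ let $\mathbf c_T$ be its circumcenter and $\overline{\mathbf x}_T$ its center of mass; for each edge $\sigma$ let $\mathbf a_1^\sigma,\mathbf a_2^\sigma$ be its endpoints. Then $$\sum_{T\in\mathcal M^Q}|T|(\mathbf c_T-\overline{\mathbf x}_T)=\sum_{\sigma\in\mathcal E^Q_{\rm ext}}|\sigma|\,\frac{|\mathbf a_1^\sigma-\overline{\mathbf x}_Q|^2+|\mathbf a_2^\sigma-\overline{\mathbf x}_Q|^2}{4}\,\mathbf n_{Q,\sigma},$$ where $\mathbf n_{Q,\sigma}$ is the unit outer normal to $Q$ on $\sigma$ and $|T|,|\sigma|$ are area and length.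
   Context: A conforming triangulation: triangles with pairwise disjoint interiors covering $Q$, any two of which intersect in empty set, a common vertex, or a common edge. *)

From HB Require Import structures.
From mathcomp Require Import all_boot all_order all_algebra.
Set Implicit Arguments. Unset Strict Implicit. Unset Printing Implicit Defensive.
Import Order.TTheory GRing.Theory Num.Theory.
Local Open Scope ring_scope.

Section Geom.
Variable R : rcfType.

Definition point := (R * R)%type.
Definition padd (p q : point) : point := (p.1 + q.1, p.2 + q.2).
Definition psub (p q : point) : point := (p.1 - q.1, p.2 - q.2).
Definition pscale (k : R) (p : point) : point := (k * p.1, k * p.2).
Definition pzero : point := (0, 0).
Definition dot (p q : point) : R := p.1 * q.1 + p.2 * q.2.
Definition nrm2 (p : point) : R := dot p p.
Definition nrm (p : point) : R := Num.sqrt (nrm2 p).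

Definition triangle := (point * point * point)%type.
Definition tA (T : triangle) : point := T.1.1.
Definition tB (T : triangle) : point := T.1.2.
Definition tC (T : triangle) : point := T.2.

Definition det2 (p q : point) : R := p.1 * q.2 - p.2 * q.1.
Definition sdet (T : triangle) : R := det2 (psub (tB T) (tA T)) (psub (tC T) (tA T)).
Definition nondegenerate (T : triangle) : Prop := sdet T != 0.
Definition tarea (T : triangle) : R := `|sdet T| / 2.
Definition tcentroid (T : triangle) : point :=
  pscale (3%:R)^-1 (padd (tA T) (padd (tB T) (tC T))).
Definition vertices (T : triangle) : seq point := [:: tA T; tB T; tC T].

Definition in_tri (T : triangle) (p : point) : Prop :=
  exists l1 l2 l3 : R, [/\ 0 <= l1, 0 <= l2, 0 <= l3, l1 + l2 + l3 = 1 &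
    p = padd (pscale l1 (tA T)) (padd (pscale l2 (tB T)) (pscale l3 (tC T)))].
Definition in_tri_int (T : triangle) (p : point) : Prop :=
  exists l1 l2 l3 : R, [/\ 0 < l1, 0 < l2, 0 < l3, l1 + l2 + l3 = 1 &
    p = padd (pscale l1 (tA T)) (padd (pscale l2 (tB T)) (pscale l3 (tC T)))].
Definition in_seg (a b p : point) : Prop :=
  exists t : R, [/\ 0 <= t, t <= 1 & p = padd (pscale (1 - t) a) (pscale t b)].

Definition good_intersection (T1 T2 : triangle) : Prop :=
  (forall p, ~ (in_tri T1 p /\ in_tri T2 p)) \/
  (exists v, [/\ v \in vertices T1, v \in vertices T2 &
      forall p, (in_tri T1 p /\ in_tri T2 p) <-> p = v]) \/
  (exists u v, [/\ u != v, (u \in vertices T1) && (v \in vertices T1),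
      (u \in vertices T2) && (v \in vertices T2) &
      forall p, (in_tri T1 p /\ in_tri T2 p) <-> in_seg u v p]).

Definition conforming (Tr : seq triangle) : Prop :=
  (forall T, T \in Tr -> nondegenerate T) /\
  (forall i j, (i < size Tr)%N -> (j < size Tr)%N -> i <> j ->
     let T1 := nth (pzero, pzero, pzero) Tr i in
     let T2 := nth (pzero, pzero, pzero) Tr j in
     (forall p, ~ (in_tri_int T1 p /\ in_tri_int T2 p)) /\
     good_intersection T1 T2).

Definition inQ (Tr : seq triangle) (p : point) : Prop :=
  exists2 T, T \in Tr & in_tri T p.

(* topological boundary of Q (Q is closed) *)
Definition on_boundary (Tr : seq triangle) (p : point) : Prop :=
  inQ Tr p /\ forall eps : R, 0 < eps ->
    exists q, nrm2 (psub q p) < eps /\ ~ inQ Tr q.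

Definition is_edge_of (T : triangle) (a b : point) : Prop :=
  [/\ a != b, a \in vertices T & b \in vertices T].

Definition boundary_edge (Tr : seq triangle) (a b : point) : Prop :=
  (exists2 T, T \in Tr & is_edge_of T a b) /\
  (forall p, in_seg a b p -> on_boundary Tr p).

(* E enumerates the set E^Q_ext of boundary edges, each unoriented edge
   exactly once (in one of its two orientations) *)
Definition enumerates_boundary_edges (Tr : seq triangle) (E : seq (point * point)) : Prop :=
  (forall e, e \in E -> boundary_edge Tr e.1 e.2) /\
  (forall a b, boundary_edge Tr a b ->
     count (fun e => (e == (a, b)) || (e == (b, a))) E = 1%N).

Definition unit_outer_normal (Tr : seq triangle) (a b n : point) : Prop :=
  [/\ nrm2 n = 1, dot n (psub b a) = 0 &
    exists2 delta : R, 0 < delta & forall t : R, 0 < t -> t < delta ->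
      ~ inQ Tr (padd (pscale (2%:R)^-1 (padd a b)) (pscale t n))].

Definition is_circumcenter (T : triangle) (c : point) : Prop :=
  nrm2 (psub (tA T) c) = nrm2 (psub (tB T) c) /\
  nrm2 (psub (tA T) c) = nrm2 (psub (tC T) c).

Definition psum (I : Type) (s : seq I) (F : I -> point) : point :=
  foldr (fun i acc => padd (F i) acc) pzero s.

Definition Qarea (Tr : seq triangle) : R := \sum_(T <- Tr) tarea T.
Definition Qcentroid (Tr : seq triangle) : point :=
  pscale (Qarea Tr)^-1 (psum Tr (fun T => pscale (tarea T) (tcentroid T))).

End Geom.

(* Orient every triangle counterclockwise and let [x] be any point.  For a
   triangle with circumcenter [c], the boundary terms of its three edges, taken
   with [x] in place of the centroid of [Q], add up to [|T| (c - x)]: expanding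
   [|a - x|^2] around [c], the three equal circumradii reduce this to a
   polynomial identity.  Summing over the triangulation, an interior edge occurs
   in both orientations and its two terms cancel, while a counterclockwise edge
   whose reverse does not occur is a boundary edge of [Q] whose outer normal
   points to its right, which fixes the sign of its term.  Finally [x] may be
   taken to be the centroid of [Q], because [\sum_T |T| (x_T - x_Q) = 0]. *)

From HB Require Import structures.
From mathcomp Require Import all_boot all_order all_algebra.
From mathcomp Require Import ring lra.
Import Order.TTheory GRing.Theory Num.Theory.
Local Open Scope ring_scope.

Set Implicit Arguments. Unset Strict Implicit. Unset Printing Implicit Defensive.

Lemma uniq_flatten_nth (X Y : eqType) (x0 : X) (s : seq X) (f : X -> seq Y) :
  (forall i, (i < size s)%N -> uniq (f (nth x0 s i))) ->
  (forall i j y, (i < size s)%N -> (j < size s)%N ->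
      y \in f (nth x0 s i) -> y \in f (nth x0 s j) -> i = j) ->
  uniq (flatten (map f s)).
Proof.
elim: s => [|x s IH] //= hu hd; rewrite cat_uniq (hu 0%N) //=; apply/andP; split.
  apply/hasPn => y /flatten_mapP [z zs yz]; apply/negP => yx.
  have hz : ((index z s).+1 < size (x :: s))%N by rewrite /= ltnS index_mem.
  by have := hd 0%N _ y isT hz; rewrite /= nth_index // => /(_ yx yz).
apply: IH => [i hi|i j y hi hj hyi hyj]; first exact: (hu i.+1).
by case: (hd i.+1 j.+1 y hi hj hyi hyj).
Qed.

Section Plane.
Variable R : rcfType.
Implicit Types (p q u v : point R) (t T : triangle R).

Lemma psumE (I : Type) (s : seq I) (F : I -> point R) : psum s F = \sum_(i <- s) F i.
Proof. by elim: s => [|i s IH] /=; rewrite ?big_nil ?big_cons ?IH. Qed.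

Lemma point_eq p q : p.1 = q.1 -> p.2 = q.2 -> p = q.
Proof. by case: p q => [? ?] [? ?] /= -> ->. Qed.

Lemma point_sum1 (I : Type) (s : seq I) (F : I -> point R) :
  (\sum_(i <- s) F i).1 = \sum_(i <- s) (F i).1.
Proof. by elim: s => [|i s IH]; rewrite ?big_nil ?big_cons //= IH. Qed.

Lemma point_sum2 (I : Type) (s : seq I) (F : I -> point R) :
  (\sum_(i <- s) F i).2 = \sum_(i <- s) (F i).2.
Proof. by elim: s => [|i s IH]; rewrite ?big_nil ?big_cons //= IH. Qed.

Lemma pscaleM (k l : R) p : pscale (k * l) p = pscale l (pscale k p).
Proof. by apply: point_eq; rewrite /pscale /=; ring. Qed.

Lemma point_eqN0 p : p = - p -> p = 0.
Proof.
case: p => x y [Ex Ey]; apply: point_eq => /=.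
- by move: Ex; lra.
- by move: Ey; lra.
Qed.

Lemma nrm2_sub_gt0 p q : p != q -> 0 < nrm2 (psub q p).
Proof.
case: p q => [p1 p2] [q1 q2] hpq; rewrite /nrm2 /dot /psub /= -!expr2.
rewrite lt_neqAle addr_ge0 ?sqr_ge0 // andbT eq_sym paddr_eq0 ?sqr_ge0 //.
rewrite !sqrf_eq0 !subr_eq0.
by apply: contra hpq => /andP [/eqP -> /eqP ->].
Qed.

(* Lagrange's identity for a unit vector [n] orthogonal to [v]. *)
Lemma nrm2_orthoE v n : dot n v = 0 -> nrm2 n = 1 -> nrm2 v = det2 v n ^+ 2.
Proof.
move=> hd hn; rewrite -[nrm2 v]mulr1 -hn.
have -> : nrm2 v * nrm2 n = det2 v n ^+ 2 + dot n v ^+ 2.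
  by rewrite /nrm2 /dot /det2; ring.
by rewrite hd expr0n /= addr0.
Qed.

Definition trot t : triangle R := (tB t, tC t, tA t).
Definition tswap t : triangle R := (tB t, tA t, tC t).

Definition ccw_orders T : seq (triangle R) :=
  if 0 < sdet T then [:: T; trot T; trot (trot T)]
  else [:: tswap T; tswap (trot T); tswap (trot (trot T))].

Definition tedge t : point R * point R := (tA t, tB t).
Definition eflip (e : point R * point R) : point R * point R := (e.2, e.1).

Lemma eflipK : involutive eflip.
Proof. by case. Qed.

Lemma trot3 t : trot (trot (trot t)) = t.
Proof. by case: t => [[A B] C]. Qed.

Lemma tswapK t : tswap (tswap t) = t.
Proof. by case: t => [[A B] C]. Qed.

Lemma sdet_trot t : sdet (trot t) = sdet t.
Proof. case: t => [[[a1 a2] [b1 b2]] [c1 c2]]; rewrite /sdet /det2 /=; ring. Qed.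

Lemma sdet_tswap t : sdet (tswap t) = - sdet t.
Proof. case: t => [[[a1 a2] [b1 b2]] [c1 c2]]; rewrite /sdet /det2 /=; ring. Qed.

Lemma sdet_neq0_vertices t :
  sdet t != 0 -> [/\ tA t != tB t, tB t != tC t & tC t != tA t].
Proof.
case: t => [[[a1 a2] [b1 b2]] [c1 c2]]; rewrite /tA /tB /tC /= => h.
split; apply/eqP => -[E1 E2]; move/eqP: h; apply;
  rewrite /sdet /det2 /psub /tA /tB /tC /= ?E1 ?E2; ring.
Qed.

Lemma in_tri_trot t q : in_tri t q -> in_tri (trot t) q.
Proof.
case: t => [[A B] C] [l1 [l2 [l3 [h1 h2 h3 h4 ->]]]].
exists l2, l3, l1; split => //; first by lra.
by apply: point_eq; rewrite /trot /tA /tB /tC /=; ring.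
Qed.

Lemma in_tri_tswap t q : in_tri t q -> in_tri (tswap t) q.
Proof.
case: t => [[A B] C] [l1 [l2 [l3 [h1 h2 h3 h4 ->]]]].
exists l2, l1, l3; split => //; first by lra.
by apply: point_eq; rewrite /tswap /tA /tB /tC /=; ring.
Qed.

Lemma in_tri_int_trot t q : in_tri_int t q -> in_tri_int (trot t) q.
Proof.
case: t => [[A B] C] [l1 [l2 [l3 [h1 h2 h3 h4 ->]]]].
exists l2, l3, l1; split => //; first by lra.
by apply: point_eq; rewrite /trot /tA /tB /tC /=; ring.
Qed.

Lemma in_tri_int_tswap t q : in_tri_int t q -> in_tri_int (tswap t) q.
Proof.
case: t => [[A B] C] [l1 [l2 [l3 [h1 h2 h3 h4 ->]]]].
exists l2, l1, l3; split => //; first by lra.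
by apply: point_eq; rewrite /tswap /tA /tB /tC /=; ring.
Qed.

Lemma in_tri_int_in_tri t q : in_tri_int t q -> in_tri t q.
Proof.
by case=> l1 [l2 [l3 [h1 h2 h3 h4 E]]]; exists l1, l2, l3; split => //; apply: ltW.
Qed.

(* [t] is [T] up to the order of its vertices. *)
Definition reordering t T := [/\ forall q, in_tri t q <-> in_tri T q,
  forall q, in_tri_int t q <-> in_tri_int T q, vertices t =i vertices T &
  forall c, is_circumcenter T c -> is_circumcenter t c].

Lemma reordering_refl T : reordering T T.
Proof. by split. Qed.

Lemma reordering_trot t T : reordering t T -> reordering (trot t) T.
Proof.
case=> h1 h2 h3 h4; split => [q|q|x|c /h4].
- split; last by move/h1/in_tri_trot.
  by move=> H; apply/h1; rewrite -(trot3 t); apply/in_tri_trot/in_tri_trot.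
- split; last by move/h2/in_tri_int_trot.
  by move=> H; apply/h2; rewrite -(trot3 t); apply/in_tri_int_trot/in_tri_int_trot.
- rewrite -h3 /vertices /trot /tA /tB /tC /= !inE.
  by case: (x == _); case: (x == _); case: (x == _).
- by rewrite /is_circumcenter /trot /tA /tB /tC /= => -[-> ->].
Qed.

Lemma reordering_tswap t T : reordering t T -> reordering (tswap t) T.
Proof.
case=> h1 h2 h3 h4; split => [q|q|x|c /h4].
- split; last by move/h1/in_tri_tswap.
  by move=> H; apply/h1; rewrite -(tswapK t); apply/in_tri_tswap.
- split; last by move/h2/in_tri_int_tswap.
  by move=> H; apply/h2; rewrite -(tswapK t); apply/in_tri_int_tswap.
- rewrite -h3 /vertices /tswap /tA /tB /tC /= !inE.
  by case: (x == _); case: (x == _); case: (x == _).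
- by rewrite /is_circumcenter /tswap /tA /tB /tC /= => -[<- ->].
Qed.

Lemma ccw_orders_reordering T t : t \in ccw_orders T -> reordering t T.
Proof.
rewrite /ccw_orders; case: ifP => _; rewrite !inE => /or3P [] /eqP ->;
  by repeat (apply: reordering_trot || apply: reordering_tswap);
     apply: reordering_refl.
Qed.

Lemma ccw_orders_sdet T t :
  sdet T != 0 -> t \in ccw_orders T -> 0 < sdet t /\ `|sdet T| = sdet t.
Proof.
move=> hT; rewrite /ccw_orders; case: ifP => hp;
  rewrite !inE => /or3P [] /eqP ->; rewrite ?sdet_tswap ?sdet_trot.
1-3: by rewrite gtr0_norm.
all: have hn : sdet T < 0 by rewrite lt_neqAle hT /= leNgt hp.
all: by rewrite ltr0_norm // oppr_gt0.
Qed.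

Lemma ccw_orders_head T : head T (ccw_orders T) \in ccw_orders T.
Proof. by rewrite /ccw_orders; case: ifP => _; rewrite inE eqxx. Qed.

Lemma ccw_orders_edge T a b : a != b -> a \in vertices T -> b \in vertices T ->
  exists2 t, t \in ccw_orders T & tedge t = (a, b) \/ tedge t = (b, a).
Proof.
move=> hab; case: T => [[A B] C].
rewrite /vertices /tA /tB /tC /= !inE => /or3P ha /or3P hb.
have m1 (x y z : triangle R) : x \in [:: x; y; z] by rewrite inE eqxx.
have m2 (x y z : triangle R) : y \in [:: x; y; z] by rewrite !inE eqxx orbT.
have m3 (x y z : triangle R) : z \in [:: x; y; z] by rewrite !inE eqxx !orbT.
rewrite /ccw_orders; case: ifP => _;
  case: ha => /eqP ?; case: hb => /eqP ?; subst; try by rewrite eqxx in hab.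
all: first [ eexists; [apply: m1 | by [left|right]]
           | eexists; [apply: m2 | by [left|right]]
           | eexists; [apply: m3 | by [left|right]] ].
Qed.

Lemma uniq_ccw_edges T : sdet T != 0 -> uniq (map tedge (ccw_orders T)).
Proof.
case: T => [[A B] C] /sdet_neq0_vertices; rewrite /tA /tB /tC /=.
move=> [/negbTE h1 /negbTE h2 /negbTE h3].
have h1' : (B == A) = false by rewrite eq_sym.
have h2' : (C == B) = false by rewrite eq_sym.
have h3' : (A == C) = false by rewrite eq_sym.
rewrite /ccw_orders; case: ifP => _ /=;
  rewrite /tedge /trot /tswap /tA /tB /tC /= !inE !xpair_eqE;
  by rewrite ?h1 ?h2 ?h3 ?h1' ?h2' ?h3' ?andbF ?andFb.
Qed.

Definition perp v : point R := (v.2, - v.1).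

(* For a counterclockwise edge [e] = (a, b), [perp (b - a)] is the outer normal
   of the triangle scaled by the edge length, so [edge_flux x e] is the boundary
   term of the theorem for that edge, with [x] in place of the centroid of [Q]. *)
Definition edge_flux x (e : point R * point R) : point R :=
  pscale ((nrm2 (psub e.1 x) + nrm2 (psub e.2 x)) / 4%:R) (perp (psub e.2 e.1)).

Lemma edge_flux_eflip x e : edge_flux x (eflip e) = - edge_flux x e.
Proof. by apply: point_eq; rewrite /edge_flux /eflip /perp /pscale /psub /=; ring. Qed.

(* Expanding [|y - x|^2] around the circumcenter [c] reduces the identity to
   a polynomial one, since the three terms [|y - c|^2] coincide. *)
Lemma edge_flux_circumcenter t c x : is_circumcenter t c ->
  edge_flux x (tedge t) + (edge_flux x (tedge (trot t)) +
    edge_flux x (tedge (trot (trot t)))) = pscale (sdet t / 2%:R) (psub c x).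
Proof.
case: t => [[A B] C]; rewrite /is_circumcenter /tA /tB /tC /= => -[e1 e2].
have expand y : nrm2 (psub y x) =
    nrm2 (psub y c) + (2%:R * dot (psub y c) (psub c x) + nrm2 (psub c x)).
  by rewrite /nrm2 /dot /psub /=; ring.
rewrite /edge_flux /tedge /trot /tA /tB /tC /= (expand A) (expand B) (expand C).
rewrite -e1 -e2; move: (nrm2 (psub A c)) => r.
case: A B C c x {e1 e2 expand} => [a1 a2] [b1 b2] [c1 c2] [d1 d2] [x1 x2].
rewrite /sdet /det2 /perp /nrm2 /dot /psub /padd /pscale /tA /tB /tC /=.
by apply: point_eq; rewrite /=; field.
Qed.

Lemma area_circumcenter_flux T c x : sdet T != 0 -> is_circumcenter T c ->
  pscale (tarea T) (psub c x) = \sum_(e <- map tedge (ccw_orders T)) edge_flux x e.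
Proof.
move=> hT hc; rewrite /ccw_orders /tarea.
case: ifP => hp; rewrite /= !big_cons big_nil addr0.
  by rewrite gtr0_norm // (edge_flux_circumcenter x hc).
have hn : sdet T < 0 by rewrite lt_neqAle hT /= leNgt hp.
have [_ _ _ hcs] := reordering_tswap (reordering_refl T).
rewrite ltr0_norm // -sdet_tswap -(edge_flux_circumcenter x (hcs _ hc)).
case: T {hT hc hp hn hcs} => [[A B] C].
by rewrite /= /tedge /tswap /trot /tA /tB /tC /= [edge_flux x (C, B) + _]addrC.
Qed.

(** * Barycentric coordinates *)

(* Barycentric coordinates of [q] with respect to [t], multiplied by [sdet t]. *)
Definition bary_b t q := det2 (psub q (tA t)) (psub (tC t) (tA t)).
Definition bary_c t q := det2 (psub (tB t) (tA t)) (psub q (tA t)).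
Definition bary_a t q := sdet t - bary_b t q - bary_c t q.

Definition bary_comb (l1 l2 l3 : R) t :=
  padd (pscale l1 (tA t)) (padd (pscale l2 (tB t)) (pscale l3 (tC t))).

Lemma bary_comb_coords t l1 l2 l3 : l1 + l2 + l3 = 1 ->
  [/\ bary_a t (bary_comb l1 l2 l3 t) = l1 * sdet t,
      bary_b t (bary_comb l1 l2 l3 t) = l2 * sdet t &
      bary_c t (bary_comb l1 l2 l3 t) = l3 * sdet t].
Proof.
move=> h; have -> : l1 = 1 - l2 - l3 by lra.
case: t => [[[a1 a2] [b1 b2]] [c1 c2]].
by rewrite /bary_a /bary_b /bary_c /bary_comb /sdet /det2 /psub /padd /pscale /=;
  split; ring.
Qed.

Lemma bary_combK t q : sdet t != 0 ->
  q = bary_comb (bary_a t q / sdet t) (bary_b t q / sdet t) (bary_c t q / sdet t) t.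
Proof.
case: t => [[[a1 a2] [b1 b2]] [c1 c2]]; case: q => [x y].
rewrite /bary_a /bary_b /bary_c /bary_comb /sdet /det2 /psub /padd /pscale /tA /tB /tC /=.
by move=> h; congr pair; field.
Qed.

Lemma in_tri_bary t q : 0 < sdet t ->
  in_tri t q <-> [/\ 0 <= bary_a t q, 0 <= bary_b t q & 0 <= bary_c t q].
Proof.
move=> hD; split.
  move=> [l1 [l2 [l3 [h1 h2 h3 h4 ->]]]].
  by have [-> -> ->] := bary_comb_coords t h4; split; apply: mulr_ge0 => //; apply: ltW.
move=> [h1 h2 h3]; have hD0 := lt0r_neq0 hD.
exists (bary_a t q / sdet t), (bary_b t q / sdet t), (bary_c t q / sdet t).
split; try exact: bary_combK; try by apply: divr_ge0 => //; apply: ltW.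
by rewrite /bary_a; field.
Qed.

Lemma in_tri_int_bary t q : 0 < sdet t ->
  in_tri_int t q <-> [/\ 0 < bary_a t q, 0 < bary_b t q & 0 < bary_c t q].
Proof.
move=> hD; split.
  move=> [l1 [l2 [l3 [h1 h2 h3 h4 ->]]]].
  by have [-> -> ->] := bary_comb_coords t h4; split; apply: mulr_gt0.
move=> [h1 h2 h3]; have hD0 := lt0r_neq0 hD.
exists (bary_a t q / sdet t), (bary_b t q / sdet t), (bary_c t q / sdet t).
split; try exact: bary_combK; try exact: divr_gt0.
by rewrite /bary_a; field.
Qed.

(** * Small displacements *)

Definition near0 (P : R -> Prop) :=
  exists2 d : R, 0 < d & forall s, 0 < s -> s < d -> P s.

Lemma near0_lt (c : R) : 0 < c -> near0 (fun s => s < c).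
Proof. by move=> hc; exists c. Qed.

Lemma near0_and (P Q : R -> Prop) : near0 P -> near0 Q -> near0 (fun s => P s /\ Q s).
Proof.
move=> [d1 h1 H1] [d2 h2 H2]; exists (Num.min d1 d2) => [|s hs]; first by rewrite lt_min h1.
by rewrite lt_min => /andP [hs1 hs2]; split; [exact: H1 | exact: H2].
Qed.

Lemma near0_impl (P Q : R -> Prop) :
  (forall s, 0 < s -> P s -> Q s) -> near0 P -> near0 Q.
Proof. by move=> hPQ [d hd H]; exists d => // s hs hsd; apply/hPQ/H. Qed.

Lemma near0_all (I : eqType) (r : seq I) (P : I -> R -> Prop) :
  (forall i, i \in r -> near0 (P i)) -> near0 (fun s => forall i, i \in r -> P i s).
Proof.
elim: r => [|i r IH] hP; first by exists 1.
have hPi := hP i (mem_head _ _).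
have /IH hPr : forall j, j \in r -> near0 (P j) by move=> j jr; apply: hP; rewrite inE jr orbT.
apply: near0_impl (near0_and hPi hPr) => s _ [Pi Pr] j.
by rewrite inE => /predU1P [->|/Pr].
Qed.

Lemma near0_witness (P : R -> Prop) : near0 P -> exists2 s, 0 < s & P s.
Proof.
move=> [d hd H]; exists (d / 2%:R); first exact: divr_gt0.
by apply: H; [exact: divr_gt0 | rewrite ltr_pdivrMr // ltr_pMr // ltr1n].
Qed.

Lemma near0_sqr_lt (e : R) : 0 < e -> near0 (fun s => s ^+ 2 < e).
Proof.
move=> he; apply: near0_impl (near0_and (near0_lt ltr01) (near0_lt he)).
move=> s hs [hs1 hse]; apply: le_lt_trans hse.
by rewrite expr2 ler_piMr // ltW.
Qed.

Lemma near0_affine_gt0 (a m : R) : 0 < a -> near0 (fun s => 0 < a + s * m).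
Proof.
move=> ha; have hm : 0 < `|m| + 1 by rewrite ltr_wpDl.
exists (a / (`|m| + 1)) => [|s hs]; first exact: divr_gt0.
rewrite ltr_pdivlMr // mulrDr mulr1 => hsa.
have hmn : - m <= `|m| by rewrite -normrN ler_norm.
have := ler_wpM2l (ltW hs) hmn; rewrite mulrN; lra.
Qed.

Definition affine_fun (L : point R -> R) :=
  forall p u (s : R), L (padd p (pscale s u)) = L p + s * (L (padd p u) - L p).

Definition seg_pt (k : R) u v : point R := padd (pscale (1 - k) u) (pscale k v).

Lemma affine_seg_pt L k u v : affine_fun L -> L (seg_pt k u v) = (1 - k) * L u + k * L v.
Proof.
move=> hL; have -> : seg_pt k u v = padd u (pscale k (psub v u)).
  by apply: point_eq; rewrite /seg_pt /padd /pscale /psub /=; ring.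
rewrite hL; have -> : padd u (psub v u) = v.
  by apply: point_eq; rewrite /padd /psub /=; ring.
by ring.
Qed.

Lemma near0_affine_lt0 L p u : affine_fun L -> L p < 0 ->
  near0 (fun s => L (padd p (pscale s u)) < 0).
Proof.
move=> hL hp; have hp' : 0 < - L p by rewrite oppr_gt0.
have := near0_affine_gt0 (- (L (padd p u) - L p)) hp'.
by apply: near0_impl => s _; rewrite hL mulrN -opprD oppr_gt0.
Qed.

Lemma bary_affine t : [/\ affine_fun (bary_a t), affine_fun (bary_b t) & affine_fun (bary_c t)].
Proof.
case: t => [[[a1 a2] [b1 b2]] [c1 c2]].
split=> [] [p1 p2] [u1 u2] s;
  by rewrite /bary_a /bary_b /bary_c /sdet /det2 /psub /padd /pscale /=; ring.
Qed.

Lemma bary_vertices t :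
  [/\ [/\ bary_a t (tA t) = sdet t, bary_b t (tA t) = 0 & bary_c t (tA t) = 0],
      [/\ bary_a t (tB t) = 0, bary_b t (tB t) = sdet t & bary_c t (tB t) = 0] &
      [/\ bary_a t (tC t) = 0, bary_b t (tC t) = 0 & bary_c t (tC t) = sdet t]].
Proof.
case: t => [[[a1 a2] [b1 b2]] [c1 c2]].
by rewrite /bary_a /bary_b /bary_c /sdet /det2 /psub /tA /tB /tC /=; split; split; ring.
Qed.

Definition mid u v : point R := pscale 2%:R^-1 (padd u v).

Lemma mid_sym u v : mid u v = mid v u.
Proof. by rewrite /mid; congr pscale; apply: point_eq; rewrite /padd /= addrC. Qed.

(* [0 < det2 (B - A) u] says that [u] points to the left of the edge [A, B]. *)
Lemma near0_in_tri_int_mid t u : 0 < sdet t -> 0 < det2 (psub (tB t) (tA t)) u ->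
  near0 (fun s => in_tri_int t (padd (mid (tA t) (tB t)) (pscale s u))).
Proof.
move=> hD hu; set m := mid _ _; have [ha hb hc] := bary_affine t.
have [Ea Eb Ec0 Ec] : [/\ bary_a t m = sdet t / 2%:R, bary_b t m = sdet t / 2%:R,
    bary_c t m = 0 & bary_c t (padd m u) = det2 (psub (tB t) (tA t)) u].
  rewrite /m /mid /bary_a /bary_b /bary_c.
  case: t {hD hu ha hb hc m} => [[[a1 a2] [b1 b2]] [c1 c2]]; case: u => [u1 u2].
  by rewrite /sdet /det2 /psub /padd /pscale /tA /tB /tC /=; split; field.
have hD2 : 0 < sdet t / 2%:R by apply: divr_gt0.
apply: near0_impl (near0_and (near0_affine_gt0 (bary_a t (padd m u) - bary_a t m) hD2)
                             (near0_affine_gt0 (bary_b t (padd m u) - bary_b t m) hD2)).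
move=> s hs [hsa hsb]; apply/in_tri_int_bary => //.
rewrite ha hb; move: hsa hsb; rewrite Ea Eb => hsa hsb; split => //.
by rewrite hc Ec0 Ec subr0 add0r; apply: mulr_gt0.
Qed.

Lemma near0_notin_tri t p u : 0 < sdet t -> ~ in_tri t p ->
  near0 (fun s => ~ in_tri t (padd p (pscale s u))).
Proof.
move=> hD /(in_tri_bary p hD) hp; have [ha hb hc] := bary_affine t.
have out L : affine_fun L -> (forall q, in_tri t q -> 0 <= L q) -> L p < 0 ->
    near0 (fun s => ~ in_tri t (padd p (pscale s u))).
  move=> hL hin /(near0_affine_lt0 u hL); apply: near0_impl => s _ hs /hin.
  by rewrite leNgt hs.
case: (ltrP (bary_a t p) 0) => [|h1]; first by apply: out => // q /(in_tri_bary q hD) [].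
case: (ltrP (bary_b t p) 0) => [|h2]; first by apply: out => // q /(in_tri_bary q hD) [].
case: (ltrP (bary_c t p) 0) => [|h3]; first by apply: out => // q /(in_tri_bary q hD) [].
by case: hp.
Qed.

Lemma bary_seg_pt t r : [/\ bary_a t (seg_pt r (tA t) (tB t)) = (1 - r) * sdet t,
  bary_b t (seg_pt r (tA t) (tB t)) = r * sdet t & bary_c t (seg_pt r (tA t) (tB t)) = 0].
Proof.
have [ha hb hc] := bary_affine t.
have [[a1 a2 a3] [b1 b2 b3] _] := bary_vertices t.
by rewrite !affine_seg_pt // a1 a2 a3 b1 b2 b3 !mulr0 !addr0 add0r.
Qed.

Lemma in_tri_seg_pt t r : 0 <= r -> r <= 1 -> in_tri t (seg_pt r (tA t) (tB t)).
Proof.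
move=> h0 h1; exists (1 - r), r, 0; split; rewrite ?subr_ge0 //; first by ring.
by apply: point_eq; rewrite /seg_pt /padd /pscale /=; ring.
Qed.

Lemma seg_pt_notin_vertices t r : 0 < sdet t -> 0 < r -> r < 1 ->
  seg_pt r (tA t) (tB t) \notin vertices t.
Proof.
move=> hD hr0 hr1; have [Ea Eb Ec] := bary_seg_pt t r.
have [[a1 a2 a3] [b1 b2 b3] [c1 c2 c3]] := bary_vertices t.
have h1 : 0 < r * sdet t by apply: mulr_gt0.
have h2 : 0 < (1 - r) * sdet t by apply: mulr_gt0 => //; rewrite subr_gt0.
rewrite /vertices !inE; apply/negP => /or3P [] /eqP E.
- by move: Eb; rewrite E a2; lra.
- by move: Ea; rewrite E b1; lra.
- by move: Ec; rewrite E c3; lra.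
Qed.

Lemma seg_pt_side_vertices t r k u v : 0 < sdet t -> 0 < r -> r < 1 ->
  u \in vertices t -> v \in vertices t -> u != v ->
  seg_pt r (tA t) (tB t) = seg_pt k u v ->
  u \in [:: tA t; tB t] /\ v \in [:: tA t; tB t].
Proof.
move=> hD hr0 hr1 hu hv huv E.
have [ha hb hc] := bary_affine t.
have [Ea Eb _] := bary_seg_pt t r.
have [[a1 a2 _] [b1 b2 _] [c1 c2 _]] := bary_vertices t.
have h1 : 0 < r * sdet t by apply: mulr_gt0.
have h2 : 0 < (1 - r) * sdet t by apply: mulr_gt0 => //; rewrite subr_gt0.
rewrite E !affine_seg_pt // in Ea Eb.
move: hu hv huv Ea Eb; rewrite /vertices !inE.
move=> /or3P [] /eqP -> /or3P [] /eqP ->; rewrite ?eqxx ?orbT //.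
- by rewrite a2 c2; lra.
- by rewrite b1 c1; lra.
- by rewrite a2 c2; lra.
- by rewrite b1 c1; lra.
Qed.

Lemma bary_c_seg_pt_perp t r s :
  bary_c t (padd (seg_pt r (tA t) (tB t)) (pscale s (perp (psub (tB t) (tA t))))) =
  - s * nrm2 (psub (tB t) (tA t)).
Proof.
case: t => [[[a1 a2] [b1 b2]] [c1 c2]].
by rewrite /bary_c /seg_pt /perp /nrm2 /dot /det2 /psub /padd /pscale /tA /tB /tC /=; ring.
Qed.

Lemma nrm2_seg_pt_perp u v r r' s :
  nrm2 (psub (padd (seg_pt r' u v) (pscale s (perp (psub v u)))) (seg_pt r u v)) =
  ((r' - r) ^+ 2 + s ^+ 2) * nrm2 (psub v u).
Proof.
case: u v => [u1 u2] [v1 v2].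
by rewrite /seg_pt /perp /nrm2 /dot /psub /padd /pscale /=; ring.
Qed.

Lemma open_unit_sqr_approx (r eta : R) : 0 <= r -> r <= 1 -> 0 < eta ->
  exists r', [/\ 0 < r', r' < 1 & (r' - r) ^+ 2 < eta].
Proof.
move=> hr0 hr1 he.
have [h hh [hh1 hhe]] := near0_witness (near0_and (near0_lt ltr01) (near0_sqr_lt he)).
have h1h : 0 <= 1 - h by rewrite subr_ge0 ltW.
have h1r : 0 <= (1 - h) * r by apply: mulr_ge0.
have h1r' : (1 - h) * r <= 1 - h by rewrite ler_piMr.
exists ((1 - h) * r + h / 2%:R); split; try lra.
have -> : (1 - h) * r + h / 2%:R - r = h * (2%:R^-1 - r) by field.
rewrite exprMn; apply: le_lt_trans hhe; rewrite ler_piMr ?sqr_ge0 //.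
have -> : (2%:R^-1 - r) ^+ 2 = 1 - (r * (1 - r) + 3%:R / 4%:R) by field.
have hr : 0 <= r * (1 - r) by apply: mulr_ge0; rewrite ?subr_ge0.
move: (r * (1 - r)) hr => x hx; lra.
Qed.

Lemma nrm_det2_ortho v n : dot n v = 0 -> nrm2 n = 1 -> nrm v = `|det2 v n|.
Proof. by move=> hd hn; rewrite /nrm (nrm2_orthoE hd hn) sqrtr_sqr. Qed.

Lemma pscale_det2_ortho v n : dot n v = 0 -> nrm2 n = 1 ->
  pscale (det2 v n) n = pscale (-1) (perp v).
Proof.
case: v n => [v1 v2] [n1 n2]; rewrite /nrm2 /dot /det2 /perp /pscale /= => hd hn.
apply: point_eq => /=.
- have -> : (v1 * n2 - v2 * n1) * n1 =
      n2 * (n1 * v1 + n2 * v2) - v2 * (n1 * n1 + n2 * n2) by ring.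
  by rewrite hd hn; ring.
- have -> : (v1 * n2 - v2 * n1) * n2 =
      - n1 * (n1 * v1 + n2 * v2) + v1 * (n1 * n1 + n2 * n2) by ring.
  by rewrite hd hn; ring.
Qed.

Lemma nrm_pscale_ortho v n : dot n v = 0 -> nrm2 n = 1 ->
  pscale (nrm v) n = pscale (- Num.sg (det2 v n)) (perp v).
Proof.
move=> hd hn; rewrite (nrm_det2_ortho hd hn) normrEsg mulrC pscaleM.
rewrite (pscale_det2_ortho hd hn).
by apply: point_eq; rewrite /pscale /=; ring.
Qed.

Lemma sum_unpaired (X : eqType) (f : X -> X) (F : X -> point R) (D : seq X) :
  involutive f -> (forall e, F (f e) = - F e) -> uniq D ->
  \sum_(e <- D) F e = \sum_(e <- D | f e \notin D) F e.
Proof.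
move=> fK hF uD; rewrite (bigID (fun e => f e \in D)) /=.
set S := \sum_(e <- D | f e \in D) F e; suff -> : S = 0 by rewrite add0r.
apply: point_eqN0; set P := [seq e <- D | f e \in D].
have hP : perm_eq P (map f P).
  apply: uniq_perm; rewrite ?filter_uniq ?(map_inj_uniq (can_inj fK)) ?filter_uniq //.
  move=> y; rewrite -{2}(fK y) (mem_map (can_inj fK)) !mem_filter fK.
  by rewrite andbC.
rewrite /S -big_filter -/P {1}(perm_big _ hP) big_map -sumrN.
by apply: eq_bigr => e _; rewrite hF.
Qed.

Lemma sum_weighted_shift (I : Type) (s : seq I) (w c g : I -> R) (y : R) :
  y * \sum_(i <- s) w i = \sum_(i <- s) w i * g i ->
  \sum_(i <- s) w i * (c i - g i) = \sum_(i <- s) w i * (c i - y).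
Proof.
move=> hy; rewrite -!(eq_bigr _ (fun i _ => esym (mulrBr (w i) _ _))) !sumrB.
by rewrite -hy mulr_sumr; congr (_ - _); apply: eq_bigr => i _; rewrite mulrC.
Qed.

End Plane.

Section Triangulation.
Variable R : rcfType.
Implicit Types (p q u v : point R) (t T : triangle R).
Variable Tr : seq (triangle R).
Hypothesis hTr : conforming Tr.

Let tri0 : triangle R := (pzero R, pzero R, pzero R).

Definition oriented_edges := flatten [seq map (@tedge R) (ccw_orders T) | T <- Tr].

Lemma oriented_edgesP e : e \in oriented_edges ->
  exists i t, [/\ (i < size Tr)%N, t \in ccw_orders (nth tri0 Tr i) & e = tedge t].
Proof.
move=> /flatten_mapP [T hT] /mapP [t ht ->].
by exists (index T Tr), t; rewrite index_mem nth_index.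
Qed.

Lemma mem_oriented_edges i t : (i < size Tr)%N ->
  t \in ccw_orders (nth tri0 Tr i) -> tedge t \in oriented_edges.
Proof.
by move=> hi ht; apply/flatten_mapP; exists (nth tri0 Tr i); [exact: mem_nth | apply: map_f].
Qed.

Lemma sdet_nth_neq0 i : (i < size Tr)%N -> sdet (nth tri0 Tr i) != 0.
Proof. by move=> hi; case: hTr => h _; apply/h/mem_nth. Qed.

Lemma sdet_ccw_nth_gt0 i t : (i < size Tr)%N -> t \in ccw_orders (nth tri0 Tr i) -> 0 < sdet t.
Proof. by move=> hi ht; case: (ccw_orders_sdet (sdet_nth_neq0 hi) ht). Qed.

Lemma near0_in_tri_int_nth_mid i t u : (i < size Tr)%N -> t \in ccw_orders (nth tri0 Tr i) ->
  0 < det2 (psub (tB t) (tA t)) u ->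
  near0 (fun s => in_tri_int (nth tri0 Tr i) (padd (mid (tA t) (tB t)) (pscale s u))).
Proof.
move=> hi ht hu; have [_ hint _ _] := ccw_orders_reordering ht.
by apply: near0_impl (near0_in_tri_int_mid (sdet_ccw_nth_gt0 hi ht) hu) => s _ /hint.
Qed.

(* Two triangles with the same counterclockwise edge would overlap to its left. *)
Lemma oriented_edge_index_unique i j ti tj : (i < size Tr)%N -> (j < size Tr)%N ->
  ti \in ccw_orders (nth tri0 Tr i) -> tj \in ccw_orders (nth tri0 Tr j) ->
  tedge ti = tedge tj -> i = j.
Proof.
move=> hi hj hti htj [EA EB]; apply/eqP/negPn/negP => /eqP hij.
have [hab _ _] := sdet_neq0_vertices (lt0r_neq0 (sdet_ccw_nth_gt0 hi hti)).
set u := perp (psub (tA ti) (tB ti)).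
have hu : 0 < det2 (psub (tB ti) (tA ti)) u.
  by move: (nrm2_sub_gt0 hab); rewrite /u /perp /nrm2 /dot /det2 /psub /=; lra.
have hu' : 0 < det2 (psub (tB tj) (tA tj)) u by rewrite -EA -EB.
have [s hs [Hi Hj]] := near0_witness (near0_and (near0_in_tri_int_nth_mid hi hti hu)
                                              (near0_in_tri_int_nth_mid hj htj hu')).
rewrite -EA -EB in Hj.
by case: hTr => _ /(_ i j hi hj hij) [/= hdisj _]; apply: (hdisj _ (conj Hi Hj)).
Qed.

Lemma uniq_oriented_edges : uniq oriented_edges.
Proof.
apply: (uniq_flatten_nth (x0 := tri0)) => [i hi|i j y hi hj].
  exact/uniq_ccw_edges/sdet_nth_neq0.
by move=> /mapP [ti hti ->] /mapP [tj htj E]; apply: (oriented_edge_index_unique hi hj hti htj E).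
Qed.

Lemma seg_pt_notin_other_tri i j t r : (i < size Tr)%N -> (j < size Tr)%N -> i <> j ->
  t \in ccw_orders (nth tri0 Tr i) -> eflip (tedge t) \notin oriented_edges ->
  0 < r -> r < 1 -> ~ in_tri (nth tri0 Tr j) (seg_pt r (tA t) (tB t)).
Proof.
move=> hi hj hij ht hfl hr0 hr1 Hin.
have hD := sdet_ccw_nth_gt0 hi ht.
have [hcl _ hvert _] := ccw_orders_reordering ht.
have hp := (hcl _).1 (in_tri_seg_pt t (ltW hr0) (ltW hr1)).
case: hTr => _ /(_ i j hi hj hij) /= [_ [G|[[v [hv _ Hv]]|[u [w [huw]]]]]].
- exact: G _ (conj hp Hin).
- move/negP: (seg_pt_notin_vertices hD hr0 hr1); apply.
  by rewrite hvert ((Hv _).1 (conj hp Hin)).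
move=> /andP [hu hw] /andP [hu' hw'] Hs.
have [k [_ _ Ep]] := (Hs _).1 (conj hp Hin).
rewrite -hvert in hu; rewrite -hvert in hw.
have [hua hwa] := seg_pt_side_vertices hD hr0 hr1 hu hw huw Ep.
have [hA hB] : tA t \in vertices (nth tri0 Tr j) /\ tB t \in vertices (nth tri0 Tr j).
  by move: hua hwa huw hu' hw'; rewrite !inE => /orP [] /eqP -> /orP [] /eqP ->;
    rewrite ?eqxx.
have [hab _ _] := sdet_neq0_vertices (lt0r_neq0 hD).
have [t' ht' [E|E]] := ccw_orders_edge hab hA hB.
- by apply: hij; apply: (oriented_edge_index_unique hi hj ht ht').
- by move: hfl; rewrite /eflip /tedge /= -E (mem_oriented_edges hj ht').
Qed.

Lemma near0_notinQ_unpaired i t r : (i < size Tr)%N -> t \in ccw_orders (nth tri0 Tr i) ->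
  eflip (tedge t) \notin oriented_edges -> 0 < r -> r < 1 ->
  near0 (fun s => ~ inQ Tr (padd (seg_pt r (tA t) (tB t)) (pscale s (perp (psub (tB t) (tA t)))))).
Proof.
move=> hi ht hfl hr0 hr1.
pose q s := padd (seg_pt r (tA t) (tB t)) (pscale s (perp (psub (tB t) (tA t)))).
have hD := sdet_ccw_nth_gt0 hi ht.
have [hab _ _] := sdet_neq0_vertices (lt0r_neq0 hD).
have : near0 (fun s => forall j, j \in iota 0 (size Tr) -> ~ in_tri (nth tri0 Tr j) (q s)).
  apply: near0_all => j; rewrite mem_iota add0n => /andP [_ hj].
  have [->|/eqP hji] := eqVneq j i.
    exists 1 => // s hs _; have [hcl _ _ _] := ccw_orders_reordering ht.
    move=> /hcl /(in_tri_bary _ hD) [_ _]; rewrite /q bary_c_seg_pt_perp mulNr oppr_ge0.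
    by rewrite leNgt pmulr_rgt0 ?nrm2_sub_gt0.
  have ht' := ccw_orders_head (nth tri0 Tr j).
  have [hcl' _ _ _] := ccw_orders_reordering ht'.
  have Hn := seg_pt_notin_other_tri hi hj (nesym hji) ht hfl hr0 hr1.
  have := near0_notin_tri (perp (psub (tB t) (tA t))) (sdet_ccw_nth_gt0 hj ht')
    (fun h => Hn ((hcl' _).1 h)).
  by apply: near0_impl => s _ Hs /hcl'.
apply: near0_impl => s _ H [T hT HT].
by apply: (H (index T Tr)); rewrite ?mem_iota ?add0n ?index_mem ?nth_index.
Qed.

Lemma unpaired_boundary_edge e : e \in oriented_edges -> eflip e \notin oriented_edges ->
  boundary_edge Tr e.1 e.2.
Proof.
move=> /oriented_edgesP [i [t [hi ht ->]]] hfl; rewrite /tedge /=.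
have [hcl _ hvert _] := ccw_orders_reordering ht.
have [hab _ _] := sdet_neq0_vertices (lt0r_neq0 (sdet_ccw_nth_gt0 hi ht)).
split.
  exists (nth tri0 Tr i); first exact: mem_nth.
  by split; rewrite // -hvert /vertices !inE eqxx ?orbT.
move=> p [r [hr0 hr1 ->]]; split.
  by exists (nth tri0 Tr i); [exact: mem_nth | exact/hcl/in_tri_seg_pt].
move=> eps heps; set nv := nrm2 (psub (tB t) (tA t)).
have hnv : 0 < nv by apply: nrm2_sub_gt0.
have heta : 0 < eps / (2%:R * nv) by rewrite divr_gt0 ?mulr_gt0.
have [r' [hr'0 hr'1 hr']] := open_unit_sqr_approx hr0 hr1 heta.
have [s hs [Hout hs2]] := near0_witness (near0_and
  (near0_notinQ_unpaired hi ht hfl hr'0 hr'1) (near0_sqr_lt heta)).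
exists (padd (seg_pt r' (tA t) (tB t)) (pscale s (perp (psub (tB t) (tA t))))).
split => //; rewrite nrm2_seg_pt_perp -/nv.
have -> : eps = (eps / (2%:R * nv) + eps / (2%:R * nv)) * nv.
  by field; rewrite gt_eqF.
by rewrite ltr_pM2r // ltrD.
Qed.

Lemma oriented_edge_neq x y : (x, y) \in oriented_edges -> x != y.
Proof.
move=> /oriented_edgesP [i [t [hi ht [-> ->]]]].
by case: (sdet_neq0_vertices (lt0r_neq0 (sdet_ccw_nth_gt0 hi ht))).
Qed.

Lemma near0_inQ_oriented_mid x y n : (x, y) \in oriented_edges ->
  0 < det2 (psub y x) n -> near0 (fun s => inQ Tr (padd (mid x y) (pscale s n))).
Proof.
move=> /oriented_edgesP [i [t [hi ht [-> ->]]]] hn.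
apply: near0_impl (near0_in_tri_int_nth_mid hi ht hn) => s _ H.
by exists (nth tri0 Tr i); [exact: mem_nth | exact: in_tri_int_in_tri].
Qed.

(* The triangle owning a counterclockwise edge lies to its left, so an outer
   normal points to its right. *)
Lemma oriented_outer_normal_det2_lt0 x y n : (x, y) \in oriented_edges ->
  unit_outer_normal Tr x y n -> det2 (psub y x) n < 0.
Proof.
move=> hxy [hn1 hdot hout].
have hnz : det2 (psub y x) n != 0.
  have := nrm2_sub_gt0 (oriented_edge_neq hxy).
  by rewrite (nrm2_orthoE hdot hn1); apply: contraTneq => ->; rewrite expr0n ltxx.
rewrite lt_neqAle hnz /= leNgt; apply/negP => hpos.
have [s _ [Hin Hout]] := near0_witness (near0_and (near0_inQ_oriented_mid hxy hpos) hout).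
exact: Hout Hin.
Qed.

Lemma unit_outer_normalC a b n : unit_outer_normal Tr a b n -> unit_outer_normal Tr b a n.
Proof.
move=> [hn1 hdot hout]; split => //; last by rewrite -[pscale _ _]/(mid b a) mid_sym.
by move: hdot; rewrite /dot /psub /=; lra.
Qed.

Definition orient e := if e \in oriented_edges then e else eflip e.
Definition unpaired_edges := [seq e <- oriented_edges | eflip e \notin oriented_edges].

Lemma boundary_edge_oriented a b : boundary_edge Tr a b ->
  (a, b) \in oriented_edges \/ (b, a) \in oriented_edges.
Proof.
move=> [[T hT [hab ha hb]] _].
have hi : (index T Tr < size Tr)%N by rewrite index_mem.
rewrite -(nth_index tri0 hT) in ha hb.
have [t ht [E|E]] := ccw_orders_edge hab ha hb; rewrite -E.
- by left; apply: mem_oriented_edges ht.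
- by right; apply: mem_oriented_edges ht.
Qed.

Lemma boundary_flux_term x a b n : boundary_edge Tr a b -> unit_outer_normal Tr a b n ->
  orient (a, b) \in unpaired_edges /\
  pscale (nrm (psub b a) * ((nrm2 (psub a x) + nrm2 (psub b x)) / 4%:R)) n =
  edge_flux x (orient (a, b)).
Proof.
move=> hab hn; have [hn1 hdot _] := hn.
have -> : pscale (nrm (psub b a) * ((nrm2 (psub a x) + nrm2 (psub b x)) / 4%:R)) n =
    pscale (- Num.sg (det2 (psub b a) n)) (edge_flux x (a, b)).
  rewrite pscaleM (nrm_pscale_ortho hdot hn1).
  by apply: point_eq; rewrite /edge_flux /pscale /=; ring.
have hsym : det2 (psub a b) n = - det2 (psub b a) n by rewrite /det2 /psub /=; ring.
rewrite /orient /unpaired_edges mem_filter; case: ifP => hD.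
  have hneg := oriented_outer_normal_det2_lt0 hD hn.
  have hba : (b, a) \notin oriented_edges.
    apply/negP => /oriented_outer_normal_det2_lt0 /(_ (unit_outer_normalC hn)).
    by rewrite hsym oppr_lt0 ltNge ltW.
  by rewrite hba hD ltr0_sg // opprK; split => //; apply: point_eq; rewrite /pscale /=; ring.
case: (boundary_edge_oriented hab) => [|hba]; first by rewrite hD.
have := oriented_outer_normal_det2_lt0 hba (unit_outer_normalC hn).
rewrite hsym oppr_lt0 => hpos.
rewrite /eflip /= hD hba gtr0_sg //; split => //.
by rewrite -[(b, a)]/(eflip (a, b)) edge_flux_eflip; apply: point_eq; rewrite /pscale /=; ring.
Qed.

Lemma orient_eq_unpaired o e : o \in unpaired_edges ->
  (orient e == o) = (e == o) || (e == eflip o).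
Proof.
rewrite mem_filter /orient => /andP [hfl ho].
case: ifP => he; have [Eeo|neo] := eqVneq e o => //=.
- by apply/esym/negP => /eqP E; move: hfl; rewrite -E he.
- by move: he; rewrite Eeo ho.
- by rewrite (can2_eq (@eflipK R) (@eflipK R)).
Qed.

Lemma perm_orient_unpaired E nQ : enumerates_boundary_edges Tr E ->
  (forall e, e \in E -> unit_outer_normal Tr e.1 e.2 (nQ e.1 e.2)) ->
  perm_eq (map orient E) unpaired_edges.
Proof.
move=> [hE1 hE2] hn; apply/allP => o _; apply/eqP; rewrite count_map.
have uU : uniq unpaired_edges by rewrite filter_uniq ?uniq_oriented_edges.
have [hoU|hoU] := boolP (o \in unpaired_edges).
  rewrite (count_uniq_mem _ uU) hoU (eq_count (fun e => orient_eq_unpaired e hoU)).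
  move: hoU; rewrite mem_filter => /andP [hfl hoD].
  by case: o hfl hoD => a b hfl hoD; rewrite hE2 //; exact: (unpaired_boundary_edge hoD hfl).
rewrite (count_memPn hoU) (eq_in_count (a2 := pred0)) ?count_pred0 // => -[a b] he /=.
apply: contraNF hoU => /eqP <-.
by have [] := boundary_flux_term (pzero R) (hE1 _ he) (hn _ he).
Qed.

End Triangulation.

Lemma Qarea_gt0 (R : rcfType) (Tr : seq (triangle R)) :
  Tr <> [::] -> conforming Tr -> 0 < Qarea Tr.
Proof.
case: Tr => [//|T s] _ [hnd _]; rewrite /Qarea big_cons.
have hT : 0 < tarea T by rewrite divr_gt0 // normr_gt0 hnd ?mem_head.
by rewrite ltr_wpDr // sumr_ge0 // => T' _; rewrite divr_ge0.
Qed.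

Lemma area_centroid_shift (R : rcfType) (Tr : seq (triangle R)) (cc : triangle R -> point R) :
  Qarea Tr != 0 ->
  psum Tr (fun T => pscale (tarea T) (psub (cc T) (tcentroid T))) =
  \sum_(T <- Tr) pscale (tarea T) (psub (cc T) (Qcentroid Tr)).
Proof.
move=> hQ; rewrite psumE; apply: point_eq; rewrite ?point_sum1 ?point_sum2;
  apply: sum_weighted_shift;
  by rewrite /Qcentroid psumE /= ?point_sum1 ?point_sum2 mulrAC -/(Qarea Tr) mulVf ?mul1r.
Qed.

Theorem mainTheorem12 (R : rcfType) (Tr : seq (triangle R))
  (E : seq (point R * point R))
  (cc : triangle R -> point R) (nQ : point R -> point R -> point R) :
  Tr <> [::] ->
  conforming Tr ->
  enumerates_boundary_edges Tr E ->
  (forall T, T \in Tr -> is_circumcenter T (cc T)) ->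
  (forall e, e \in E -> unit_outer_normal Tr e.1 e.2 (nQ e.1 e.2)) ->
  psum Tr (fun T => pscale (tarea T) (psub (cc T) (tcentroid T))) =
  psum E (fun e =>
    pscale (nrm (psub e.2 e.1) *
            ((nrm2 (psub e.1 (Qcentroid Tr)) + nrm2 (psub e.2 (Qcentroid Tr))) / 4%:R))
           (nQ e.1 e.2)).
Proof.
move=> hne hTr hE hcc hn.
rewrite area_centroid_shift ?lt0r_neq0 ?Qarea_gt0 //; set x := Qcentroid Tr.
have Htri : {in Tr, forall T, pscale (tarea T) (psub (cc T) x) =
    \sum_(e <- map (@tedge R) (ccw_orders T)) edge_flux x e}.
  by move=> T hT; apply: area_circumcenter_flux; [case: hTr => h _; apply: h | apply: hcc].
rewrite (eq_big_seq _ Htri).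
have -> : \sum_(T <- Tr) \sum_(e <- map (@tedge R) (ccw_orders T)) edge_flux x e =
    \sum_(e <- oriented_edges Tr) edge_flux x e by rewrite big_flatten big_map.
rewrite (sum_unpaired (@eflipK R) (edge_flux_eflip x) (uniq_oriented_edges hTr)).
rewrite -big_filter -/(unpaired_edges Tr) -(perm_big _ (perm_orient_unpaired hTr hE hn)).
rewrite big_map psumE; apply: eq_big_seq => -[a b] he.
by have [_ ->] := boundary_flux_term hTr x (hE.1 _ he) (hn _ he).
Qed.
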